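(* The GT system $(\mathcal L,\{r_0,r_1,r_2\})$ is terminating. Moreover, every derivation sequence $G=G_0\Rightarrow G_1\Rightarrow\cdots\Rightarrow G_n$ of this system starting from a TLRG $G$ has length $n\le 2|V_G|$.
   Context: Graphs over a label alphabet $(\mathcal L_V,\mathcal L_E)$ are tuples $G=(V,E,s,t,l,m,p)$ with $V,E$ finite, $s,t:E\to V$ total, $l:V\rightharpoonup\mathcal L_V$ partial, $m:E\to\mathcal L_E$ total, $p:V\rightharpoonup\{0,1\}$ partial (rootedness; $p(v)=1$ means $v$ is a root). TLRG = $l,p$ total. Morphisms preserve sources, targets, edge labels, and node labels and rootedness wherever defined. A rule $\langle L\leftarrow K\rightarrow R\rangle$ has TLRGs $L,R$ and a common subgraph $K$ (sets included, $s,t,m$ restricted, partial maps $l_K\subseteq l_L$, $p_K\subseteq p_L$, likewise for $R$). It is applied to a TLRG $G$ via an injective morphism $g:L\to G$ satisfying the dangling condition (no edge outside $g(L)$ incident to a node of $g(V_L\setminus V_K)$) by deleting images of items of $L$ not in $K$ and undefining label/rootedness of $g_V(v)$ where undefined for $v\in V_K$, then adding disjointly the items of $R$ not in $K$ and setting label/rootedness of $g_V(v)$ to $l_R(v)/p_R(v)$ where undefined in $K$; $G\Rightarrow H$ when $H$ is isomorphic to the result. A system is terminating if there is no infinite sequence $G_0\Rightarrow G_1\Rightarrow\cdots$. Here $\mathcal L=(\{\square,\triangle\},\{\square\})$ and all edges are labelled $\square$. Rule $r_0$: $L$ has an unrooted node $1$ labelled $\square$, a rooted node $2$ labelled $\square$,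 and an edge $1\to 2$; $K$ consists of node $1$ with undefined label and rootedness; $R$ consists of node $1$, rooted, labelled $\square$. Rule $r_1$: identical to $r_0$ except that node $1$ of $L$ is labelled $\triangle$. Rule $r_2$: $L$ has a rooted node $1$ labelled $\square$, an unrooted node $2$ labelled $\square$, and an edge $1\to 2$; $K$ consists of nodes $1,2$ with undefined labels and rootedness and no edges; $R$ has node $1$ unrooted labelled $\triangle$, node $2$ rooted labelled $\square$, and an edge $1\to 2$. *)

From HB Require Import structures.
From mathcomp Require Import all_boot.
Set Implicit Arguments. Unset Strict Implicit. Unset Printing Implicit Defensive.

Inductive nlabel := Sq | Tri.
Inductive elabel := ESq.

Record graph := Graph {
  gV : finType;
  gE : finType;
  src : gE -> gV;
  tgt : gE -> gV;
  lab : gV -> option nlabel;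
  elab : gE -> elabel;
  root : gV -> option bool        (* partial rootedness p; Some true = root *)
}.

Definition TLRG (G : graph) : Prop :=
  forall v : gV G, lab v <> None /\ root v <> None.

Definition is_morphism (G H : graph) (fV : gV G -> gV H) (fE : gE G -> gE H) : Prop :=
  (forall e, src (fE e) = fV (src e)) /\
  (forall e, tgt (fE e) = fV (tgt e)) /\
  (forall e, elab (fE e) = elab e) /\
  (forall v l, lab v = Some l -> lab (fV v) = Some l) /\
  (forall v b, root v = Some b -> root (fV v) = Some b).

Definition inclusion (K L : graph) (kV : gV K -> gV L) (kE : gE K -> gE L) : Prop :=
  is_morphism kV kE /\ injective kV /\ injective kE.

(* A rule <L <- K -> R>, with K given as a common subgraph via inclusions *)
Record rule := Rule {
  rK : graph; rL : graph; rR : graph;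
  kLV : gV rK -> gV rL; kLE : gE rK -> gE rL;
  kRV : gV rK -> gV rR; kRE : gE rK -> gE rR
}.

Definition wf_rule (r : rule) : Prop :=
  TLRG (rL r) /\ TLRG (rR r) /\
  inclusion (kLV (r:=r)) (kLE (r:=r)) /\ inclusion (kRV (r:=r)) (kRE (r:=r)).

Section Apply.
Variables (r : rule) (G : graph).
Variables (fV : gV (rL r) -> gV G) (fE : gE (rL r) -> gE G).

Definition inKV (x : gV (rL r)) : bool := [exists k, kLV k == x].
Definition inKE (x : gE (rL r)) : bool := [exists k, kLE k == x].
Definition delV (v : gV G) : bool := [exists x, (fV x == v) && ~~ inKV x].
Definition delE (e : gE G) : bool := [exists x, (fE x == e) && ~~ inKE x].

Definition dangling_ok : Prop :=
  forall e : gE G, (forall x, fE x <> e) -> ~~ delV (src e) /\ ~~ delV (tgt e).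

(* items of the result: kept items of G, plus items of R not in K *)
Definition keepV (x : gV G + gV (rR r)) : bool :=
  match x with
  | inl v => ~~ delV v
  | inr w => ~~ [exists k, kRV k == w]
  end.
Definition keepE (x : gE G + gE (rR r)) : bool :=
  match x with
  | inl e => ~~ delE e
  | inr f => ~~ [exists k, kRE k == f]
  end.
Definition resV := {x : gV G + gV (rR r) | keepV x}.
Definition resE := {x : gE G + gE (rR r) | keepE x}.

(* a node of R is glued to the image in G of the corresponding K-node *)
Definition glueR (w : gV (rR r)) : gV G + gV (rR r) :=
  match [pick k | kRV k == w] with
  | Some k => inl (fV (kLV k))
  | None => inr w
  end.

Definition res_src (x : gE G + gE (rR r)) : gV G + gV (rR r) :=
  match x with inl e => inl (src e) | inr f => glueR (src f) end.
Definition res_tgt (x : gE G + gE (rR r)) : gV G + gV (rR r) :=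
  match x with inl e => inl (tgt e) | inr f => glueR (tgt f) end.
Definition res_elab (x : gE G + gE (rR r)) : elabel :=
  match x with inl e => elab e | inr f => elab f end.

(* node labels: for v = g(k), k in V_K with l_K(k) undefined, the label is
   first undefined and then set to l_R(k); otherwise it is unchanged. *)
Definition res_lab (x : gV G + gV (rR r)) : option nlabel :=
  match x with
  | inl v =>
      match [pick k | fV (kLV k) == v] with
      | Some k => if lab k is None then lab (kRV k) else lab v
      | None => lab v
      end
  | inr w => lab w
  end.
Definition res_root (x : gV G + gV (rR r)) : option bool :=
  match x with
  | inl v =>
      match [pick k | fV (kLV k) == v] with
      | Some k => if root k is None then root (kRV k) else root v
      | None => root v
      end
  | inr w => root w
  end.
End Apply.

Definition step (r : rule) (G H : graph) : Prop :=
  TLRG G /\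
  exists (fV : gV (rL r) -> gV G) (fE : gE (rL r) -> gE G),
    is_morphism fV fE /\ injective fV /\ injective fE /\ dangling_ok fV fE /\
    exists (phV : gV H -> resV fV) (phE : gE H -> resE fE),
      bijective phV /\ bijective phE /\
      (forall e, val (phV (src e)) = res_src fV (val (phE e))) /\
      (forall e, val (phV (tgt e)) = res_tgt fV (val (phE e))) /\
      (forall e, elab e = res_elab (val (phE e))) /\
      (forall v, lab v = res_lab fV (val (phV v))) /\
      (forall v, root v = res_root fV (val (phV v))).

Definition void_of (T : Type) (x : void) : T := match x with end.

Definition n1 : 'I_2 := ord0.
Definition n2 : 'I_2 := ord_max.

Definition K01 : graph :=
  @Graph unit void (@void_of unit) (@void_of unit)
         (fun _ => None) (@void_of elabel) (fun _ => None).
Definition R01 : graph :=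
  @Graph unit void (@void_of unit) (@void_of unit)
         (fun _ => Some Sq) (@void_of elabel) (fun _ => Some true).
Definition L01 (l1 : nlabel) : graph :=
  @Graph 'I_2 unit (fun _ => n1) (fun _ => n2)
         (fun v => if v == n1 then Some l1 else Some Sq) (fun _ => ESq)
         (fun v => Some (v != n1)).

Definition r0 : rule :=
  @Rule K01 (L01 Sq) R01 (fun _ => n1) (@void_of unit) id id.
Definition r1 : rule :=
  @Rule K01 (L01 Tri) R01 (fun _ => n1) (@void_of unit) id id.

Definition K2 : graph :=
  @Graph 'I_2 void (@void_of 'I_2) (@void_of 'I_2)
         (fun _ => None) (@void_of elabel) (fun _ => None).
Definition L2 : graph :=
  @Graph 'I_2 unit (fun _ => n1) (fun _ => n2)
         (fun _ => Some Sq) (fun _ => ESq) (fun v => Some (v == n1)).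
Definition R2 : graph :=
  @Graph 'I_2 unit (fun _ => n1) (fun _ => n2)
         (fun v => if v == n1 then Some Tri else Some Sq) (fun _ => ESq)
         (fun v => Some (v == n2)).
Definition r2 : rule :=
  @Rule K2 L2 R2 id (@void_of unit) id (@void_of unit).

Definition sys_step (G H : graph) : Prop :=
  step r0 G H \/ step r1 G H \/ step r2 G H.

From HB Require Import structures.
From mathcomp Require Import all_boot.
Set Implicit Arguments. Unset Strict Implicit. Unset Printing Implicit Defensive.

(* Every rule strictly decreases the weight |V_G| + #(nodes labelled square),
   which is at most 2|V_G|: rules r0 and r1 delete the square-labelled root
   and relabel at most one node to square, while r2 deletes nothing and turns
   one square label into a triangle. *)

Lemma chain_length_le (T : Type) (R : T -> T -> Prop) (mu : T -> nat) :
  (forall x y, R x y -> mu y < mu x) ->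
  forall (s : nat -> T) n, (forall i, i < n -> R (s i) (s i.+1)) -> n <= mu (s 0).
Proof.
move=> mu_dec s n chain.
suff weight_drop i : i <= n -> mu (s i) + i <= mu (s 0).
  exact: leq_trans (leq_addl _ _) (weight_drop n (leqnn n)).
elim: i => [|i IHi] lt_in; first by rewrite addn0.
apply: leq_trans (IHi (ltnW lt_in)).
by rewrite addnS ltn_add2r; apply: mu_dec; apply: chain.
Qed.

Lemma no_infinite_chain (T : Type) (R : T -> T -> Prop) (mu : T -> nat) :
  (forall x y, R x y -> mu y < mu x) ->
  ~ exists s : nat -> T, forall i, R (s i) (s i.+1).
Proof.
move=> mu_dec [s chain].
by have := chain_length_le mu_dec (fun i _ => chain i) (n := (mu (s 0)).+1);
  rewrite ltnn.
Qed.

Lemma card_preim_bij (A B : finType) (f : A -> B) (P : pred B) :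
  bijective f -> #|[pred a | P (f a)]| = #|[pred b | P b]|.
Proof.
case=> g fK gK; rewrite -(card_image (can_inj gK) [pred b | P b]).
apply: eq_card => a; apply/idP/imageP => [Pfa|[b Pb ->]].
  by exists (f a); rewrite // fK.
by rewrite inE gK.
Qed.

Lemma card_sig_pred (T : finType) (P Q : pred T) :
  #|[pred x : {x | P x} | Q (val x)]| = #|[pred y | P y && Q y]|.
Proof.
rewrite -(card_image val_inj); apply: eq_card => y.
apply/imageP/andP => [[x Qx ->]|[Py Qy]]; first by split; [exact: valP|].
by exists (exist _ y Py).
Qed.

Lemma card_sum_inl (T1 T2 : finType) (P : pred (T1 + T2)) :
  (forall w, ~~ P (inr w)) -> #|[pred y | P y]| = #|[pred v | P (inl v)]|.
Proof.
move=> notPr; rewrite -(card_image (@inl_inj T1 T2)); apply: eq_card => y.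
apply/idP/imageP => [|[v Pv ->]] //.
by case: y => [v|w] Py; [exists v | move: (notPr w) Py; rewrite inE => /negbTE ->].
Qed.

Definition is_square (o : option nlabel) : bool := if o is Some Sq then true else false.
Definition square_nodes (G : graph) : nat := #|[pred v : gV G | is_square (lab v)]|.
Definition weight (G : graph) : nat := #|gV G| + square_nodes G.

Lemma weight_le (G : graph) : weight G <= 2 * #|gV G|.
Proof. by rewrite /weight mul2n -addnn leq_add2l max_card. Qed.

Lemma step_card_lab (r : rule) (G H : graph) :
  (forall w, exists k, kRV (r:=r) k = w) -> step r G H ->
  exists fV : gV (rL r) -> gV G,
    [/\ injective fV,
        forall x l, lab x = Some l -> lab (fV x) = Some l &
        forall P : pred (option nlabel),
          #|[pred v : gV H | P (lab v)]| =
          #|[pred v : gV G | keepV fV (inl v) && P (res_lab fV (inl v))]|].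
Proof.
move=> kRV_onto [_ [fV [fE [[_ [_ [_ [fV_lab _]]]] [fV_inj [_ [_ ]]]]]]].
case=> phV [_ [phV_bij [_ [_ [_ [_ [lab_phV _]]]]]]].
exists fV; split=> // P.
rewrite -(card_sum_inl (P := fun y => keepV fV y && P (res_lab fV y))); last first.
  move=> w; apply/nandP; left; rewrite negbK.
  by case: (kRV_onto w) => k <-; apply/existsP; exists k.
rewrite -(card_sig_pred _ (fun y => P (res_lab fV y))) -(card_preim_bij _ phV_bij).
by apply: eq_card => v; rewrite !inE lab_phV.
Qed.

Lemma weight_step (r : rule) (G H : graph) :
  (forall w, exists k, kRV (r:=r) k = w) -> step r G H ->
  exists fV : gV (rL r) -> gV G,
    [/\ injective fV,
        forall x l, lab x = Some l -> lab (fV x) = Some l &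
        weight H = #|[pred v | keepV fV (inl v)]| +
                   #|[pred v | keepV fV (inl v) && is_square (res_lab fV (inl v))]|].
Proof.
move=> kRV_onto /(step_card_lab kRV_onto) [fV [fV_inj fV_lab card_lab]].
exists fV; split=> //; rewrite /weight /square_nodes card_lab; congr (_ + _).
have -> : #|gV H| = #|[pred v : gV H | predT (lab v)]| by apply: eq_card.
rewrite card_lab.
by apply: eq_card => v; rewrite !inE andbT.
Qed.

Lemma I2_cases (x : 'I_2) : x = n1 \/ x = n2.
Proof. by case: x => [[|[|//]] ?]; [left|right]; apply: val_inj. Qed.

Lemma weight_r01 (l1 : nlabel) (G H : graph) :
  step (@Rule K01 (L01 l1) R01 (fun _ => n1) (@void_of unit) id id) G H ->
  weight H < weight G.
Proof.
case/weight_step=> [[]|]; first by exists tt.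
move=> fV [fV_inj fV_lab ->].
have keep_del2 v : keepV fV (inl v) = (v != fV n2).
  rewrite /keepV /delV; congr negb; apply/existsP/eqP => [[x /andP [/eqP <-]]|->].
    by case: (I2_cases x) => -> // /negP []; apply/existsP; exists tt.
  exists n2; rewrite eqxx /=; apply/negP => /existsP [k /eqP].
  by move/(congr1 val).
have lab_n1_Sq v : res_lab fV (inl v) = if v == fV n1 then Some Sq else lab v.
  rewrite /res_lab; case: pickP => [k /eqP <-|no_pick] /=; first by rewrite eqxx.
  by have := no_pick tt; rewrite /= eq_sym => ->.
have lab_n2 : lab (fV n2) = Some Sq by exact: fV_lab.
have n2_neq_n1 : (fV n2 == fV n1) = false by rewrite (inj_eq fV_inj).
have card_keep : #|[pred v | keepV fV (inl v)]| = #|gV G|.-1.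
  rewrite (eq_card (B := predC1 (fV n2))) => [|v]; last by rewrite !inE keep_del2.
  by rewrite cardC1.
have card_keep_sq :
    #|[pred v | keepV fV (inl v) && is_square (res_lab fV (inl v))]| <= square_nodes G.
  rewrite (eq_card (B := [pred v | (v != fV n2) &&
                       is_square (if v == fV n1 then Some Sq else lab v)])); last first.
    by move=> v; rewrite !inE keep_del2 lab_n1_Sq.
  rewrite /square_nodes (cardD1 (fV n1)) [X in _ <= X](cardD1 (fV n2)).
  rewrite !inE eqxx eq_sym n2_neq_n1 lab_n2 add1n ltnS subset_leq_card //.
  by apply/subsetP => v; rewrite !inE; case: eqP.
have G_nonempty : 0 < #|gV G| by apply/card_gt0P; exists (fV n1).
by rewrite card_keep /weight -addSn leq_add // prednK.
Qed.

Lemma weight_r2 (G H : graph) : step r2 G H -> weight H < weight G.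
Proof.
case/weight_step=> [w|]; first by exists w.
move=> fV [fV_inj fV_lab ->].
have keep_all v : keepV fV (inl v).
  rewrite /keepV /delV; apply/negP => /existsP [x /andP [_ /negP []]].
  by apply/existsP; exists x.
have lab_Sq x : lab (fV x) = Some Sq by exact: fV_lab.
have res_lab_sq v : is_square (res_lab fV (inl v)) = (v != fV n1) && is_square (lab v).
  rewrite /res_lab; case: pickP => [k /eqP <-|no_pick] /=.
    by case: (I2_cases k) => ->; rewrite ?eqxx // (inj_eq fV_inj) lab_Sq.
  by have := no_pick n1; rewrite /= eq_sym => ->.
rewrite (eq_card (B := predT)) => [|v]; last by rewrite !inE keep_all.
rewrite /weight ltn_add2l /square_nodes [X in _ < X](cardD1 (fV n1)) !inE lab_Sq.
rewrite add1n ltnS subset_leq_card //.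
by apply/subsetP => v; rewrite !inE keep_all res_lab_sq.
Qed.

Lemma weight_sys_step (G H : graph) : sys_step G H -> weight H < weight G.
Proof. by case=> [|[]]; [apply: weight_r01 | apply: weight_r01 | apply: weight_r2]. Qed.

Theorem lemma4p5 :
  (~ exists Gs : nat -> graph, forall i : nat, sys_step (Gs i) (Gs i.+1)) /\
  (forall (Gs : nat -> graph) (n : nat),
      TLRG (Gs 0) ->
      (forall i : nat, i < n -> sys_step (Gs i) (Gs i.+1)) ->
      n <= 2 * #|gV (Gs 0)|).
Proof.
split; first exact: no_infinite_chain weight_sys_step.
move=> Gs n _ chain.
exact: leq_trans (chain_length_le weight_sys_step chain) (weight_le _).
Qed.
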